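(* Let $H$ be a digraph (possibly with loops) and let $D$ be an $H$-colored quasi-transitive digraph such that every directed $3$-cycle of $D$ is an $H$-cycle. For every $k \geq 2$, $D$ has a $(k,H)$-kernel.
   Context: All digraphs are finite. A digraph $D$ is quasi-transitive if for all distinct $u,v\in V(D)$, whenever there is a directed $uv$-path of length $2$, $u$ and $v$ are joined by an arc (in some direction). $D$ has no loops and comes with a map $\rho: A(D)\to V(H)$. For a walk $W=(x_0,\ldots,x_n)$ in $D$, there is an obstruction on $x_i$ if $(\rho(x_{i-1},x_i),\rho(x_i,x_{i+1})) \notin A(H)$; for an open walk this is considered at internal vertices $x_i$, $1\le i\le n-1$, for a closed walk at all $i\in\{0,\ldots,n-1\}$ with indices modulo $n$. $O_H(W)$ is the set of indices with an obstruction; the $H$-length is $l_H(W)=|O_H(W)|+1$ for open $W$ and $|O_H(W)|$ for closed $W$. An $H$-cycle is a directed cycle with no obstructions. A $(k,H)$-kernel ($k\ge2$) is a set $S\subseteq V(D)$ such that for every two distinct $u,v\in S$ every directed $uv$-path in $D$ has $H$-length at least $k$, and for every $x\in V(D)\setminus S$ there is a directed path from $x$ to a vertex of $S$ of $H$-length at most $k-1$. *)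

From mathcomp Require Import all_boot.
Set Implicit Arguments. Unset Strict Implicit. Unset Printing Implicit Defensive.

(* An H-colouring of D is rho : V -> V -> VH; only the
   values rho x y with arc x y are meaningful. *)

Section Defs.
Variables (V VH : finType) (arc : rel V) (HA : rel VH) (rho : V -> V -> VH).

Definition loopless : Prop := forall x, ~~ arc x x.

Definition quasi_transitive : Prop :=
  forall u v w, u != w -> arc u v -> arc v w -> arc u w || arc w u.

(* A walk W = (x_0, ..., x_n) is represented by its first vertex x = x_0 and
   the list p = [x_1; ...; x_n]. *)
Definition vtx (x : V) (p : seq V) (i : nat) : V := nth x (x :: p) i.

Definition open_obstruction (x : V) (p : seq V) (i : nat) : bool :=
  ~~ HA (rho (vtx x p i.-1) (vtx x p i)) (rho (vtx x p i) (vtx x p i.+1)).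

Definition open_O_H (x : V) (p : seq V) : seq nat :=
  [seq i <- iota 1 (size p).-1 | open_obstruction x p i].

Definition open_H_length (x : V) (p : seq V) : nat := size (open_O_H x p) + 1.

Definition dipath (x : V) (p : seq V) : bool := path arc x p && uniq (x :: p).

Definition dipath_from_to (u v : V) (p : seq V) : bool :=
  dipath u p && (last u p == v).

(* A closed walk (x_0, ..., x_{n-1}, x_n = x_0) is represented by the list
   c = [x_0; ...; x_{n-1}] (n = size c); indices are taken modulo n. *)
Definition cvtx (c : seq V) (x0 : V) (i : nat) : V := nth x0 c (i %% size c).

Definition closed_obstruction (c : seq V) (x0 : V) (i : nat) : bool :=
  ~~ HA (rho (cvtx c x0 (i + size c - 1)) (cvtx c x0 i))
        (rho (cvtx c x0 i) (cvtx c x0 i.+1)).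

Definition dicycle (c : seq V) : bool := (1 < size c) && cycle arc c && uniq c.

Definition H_cycle (c : seq V) : bool :=
  dicycle c &&
  match c with
  | [::] => true
  | x0 :: _ => all (fun i => ~~ closed_obstruction c x0 i) (iota 0 (size c))
  end.

Definition kH_kernel (k : nat) (S : {set V}) : Prop :=
  (forall u v, u \in S -> v \in S -> u != v ->
     forall p, dipath_from_to u v p -> k <= open_H_length u p) /\
  (forall x, x \notin S ->
     exists s, exists p, [/\ s \in S, dipath_from_to x s p & open_H_length x p <= k - 1]).

End Defs.

From mathcomp Require Import all_boot.
From mathcomp Require Import zify.

Set Implicit Arguments.
Unset Strict Implicit.
Unset Printing Implicit Defensive.

(* Take S to be one vertex of each terminal strong component of D.  No directed
   path joins two distinct vertices of S, so S is independent for every k, and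
   every vertex reaches S.  On a shortest path, consecutive vertices a -> b -> c
   are distinct and a -> c is not an arc, so quasi-transitivity gives c -> a:
   abc is a directed 3-cycle, hence an H-cycle, and there is no obstruction at
   b.  Shortest paths thus have H-length 1 <= k - 1. *)

Section TerminalComponents.
Variables (V : finType) (arc : rel V).

Definition terminal (t : V) : Prop := forall z, connect arc t z -> connect arc z t.

Lemma connect_terminal x : exists2 t, connect arc x t & terminal t.
Proof.
have [t xt t_min] := arg_minnP (fun y => #|connect arc y|) (connect0 arc x).
exists t => // z tz.
have sub_zt : connect arc z \subset connect arc t.
  by apply/subsetP => w; rewrite !inE; apply: connect_trans.
have [_ card_eq] := subset_leqif_card sub_zt.
have /subsetP/(_ t) : connect arc t \subset connect arc z.
  by rewrite -card_eq eqn_leq subset_leq_card // t_min // (connect_trans xt tz).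
by rewrite !inE connect0; apply.
Qed.

Definition terminal_rep (y : V) : bool :=
  [forall z, connect arc y z ==> connect arc z y && (enum_rank y <= enum_rank z)].

Lemma terminal_rep_connect_eq u v :
  terminal_rep u -> terminal_rep v -> connect arc u v -> u = v.
Proof.
move=> /forallP/(_ v)/implyP u_rep /forallP/(_ u)/implyP v_rep uv.
have /andP[vu le_uv] := u_rep uv.
have /andP[_ le_vu] := v_rep vu.
by apply/enum_rank_inj/val_inj/eqP; rewrite eqn_leq le_uv le_vu.
Qed.

Lemma connect_terminal_rep x : exists2 s, connect arc x s & terminal_rep s.
Proof.
have [t xt t_term] := connect_terminal x.
have [s ts s_min] := arg_minnP (fun y => val (enum_rank y)) (connect0 arc t).
exists s; first exact: connect_trans xt ts.
apply/forallP => z; apply/implyP => sz.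
have tz := connect_trans ts sz.
by rewrite s_min // andbT (connect_trans (t_term z tz) ts).
Qed.

End TerminalComponents.

Section ShortestDipaths.
Variables (V : finType) (arc : rel V).

Definition shortest_dipath (x : V) (p : seq V) : Prop :=
  dipath arc x p /\
  forall q, dipath arc x q -> last x q = last x p -> size p <= size q.

Lemma connect_shortest_dipath x y :
  connect arc x y -> exists2 p, shortest_dipath x p & last x p = y.
Proof.
move=> /connectP[p0 p0_path ->].
have [p p_path p_uniq _] := shortenP p0_path.
pose has_dipath n :=
  [exists q : n.-tuple V, dipath arc x q && (last x q == last x p)].
have has_p : exists n, has_dipath n.
  exists (size p); apply/existsP; exists (in_tuple p).
  by rewrite /dipath p_path -/(uniq (x :: p)) p_uniq /=.
have [n /existsP[q /andP[q_dipath /eqP q_last]] q_min] := ex_minnP has_p.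
exists (val q) => //; split=> // r r_dipath r_last.
rewrite size_tuple; apply: q_min; apply/existsP; exists (in_tuple r).
by rewrite r_dipath r_last q_last /=.
Qed.

Lemma shortest_dipath_no_chord x q1 b c q2 :
  shortest_dipath x (q1 ++ b :: c :: q2) -> ~~ arc (last x q1) c.
Proof.
case=> /andP[p_path p_uniq] p_min; apply/negP => chord.
have /p_min : dipath arc x (q1 ++ c :: q2).
  apply/andP; split.
    by move: p_path; rewrite !cat_path /= chord => /and4P[-> _ _ ->].
  apply: subseq_uniq p_uniq; rewrite -!cat_cons.
  by apply: cat_subseq; rewrite ?subseq_refl ?subseq_cons.
by rewrite !last_cat /= !size_cat /= addnS ltnn => /(_ erefl).
Qed.

End ShortestDipaths.

Lemma open_O_H_nil (V VH : finType) (HA : rel VH) (rho : V -> V -> VH) x p :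
  (forall q1 b c q2, p = q1 ++ b :: c :: q2 -> HA (rho (last x q1) b) (rho b c)) ->
  open_O_H HA rho x p = [::].
Proof.
move=> no_obstruction; apply/eqP; rewrite -[_ == _]negbK -has_filter.
apply/hasPn => i; rewrite mem_iota => /andP[i_gt0 i_lt].
rewrite /open_obstruction negbK.
have := size_drop i.-1 p.
case drop_p: (drop i.-1 p) => [|b [|c q2]] /= size_drop_p; try lia.
have p_split : p = take i.-1 p ++ b :: c :: q2 by rewrite -drop_p cat_take_drop.
have size_q1 : size (take i.-1 p) = i.-1 by rewrite size_takel //; lia.
move: (take i.-1 p) p_split size_q1 => q1 p_split size_q1; subst p.
have -> : i = (size q1).+1 by lia.
rewrite /vtx -cat_cons !nth_cat /= ltnSn ltnn subnn subSS subSnn /= -last_nth.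
rewrite ltnNge leqnSn /=.
exact: no_obstruction.
Qed.

Section QuasiTransitive.
Variables (V VH : finType) (arc : rel V) (HA : rel VH) (rho : V -> V -> VH).
Hypothesis arc_qt : quasi_transitive arc.
Hypothesis triangle_H_cycle :
  forall c : seq V, size c = 3 -> dicycle arc c -> H_cycle arc HA rho c.

Lemma shortest_dipath_H_length x p :
  shortest_dipath arc x p -> open_H_length HA rho x p = 1.
Proof.
move=> p_short; rewrite /open_H_length open_O_H_nil //.
move=> q1 b c q2 p_split; rewrite p_split in p_short.
have no_ac := shortest_dipath_no_chord p_short.
have [/andP[p_path p_uniq] _] := p_short.
move: p_path; rewrite cat_path /= => /and4P[_ ab bc _].
have /and3P[a_b a_c b_c] : [&& last x q1 != b, last x q1 != c & b != c].
  move: p_uniq; rewrite -cat_cons lastI cat_rcons cat_uniq => /and3P[_ _] /=.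
  by rewrite !inE !negb_or => /and4P[/and3P[-> -> _] /andP[-> _] _ _].
have ca : arc c (last x q1) by move: (arc_qt a_c ab bc); rewrite (negbTE no_ac).
have abc : dicycle arc [:: last x q1; b; c].
  by rewrite /dicycle /= ab bc ca !inE !negb_or a_b a_c b_c.
have /andP[_ /and3P[_ no_obs_b _]] :=
  triangle_H_cycle (erefl : size [:: _; _; _] = 3) abc.
by move: no_obs_b; rewrite /closed_obstruction negbK.
Qed.

End QuasiTransitive.

Theorem corollary23 (V VH : finType) (arc : rel V) (HA : rel VH)
    (rho : V -> V -> VH) :
  loopless arc ->
  quasi_transitive arc ->
  (forall c : seq V, size c = 3 -> dicycle arc c -> H_cycle arc HA rho c) ->
  forall k : nat, 2 <= k -> exists S : {set V}, kH_kernel arc HA rho k S.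
Proof.
move=> _ arc_qt triangle_H_cycle k k_ge2.
exists [set y | terminal_rep arc y]; split.
  move=> u v; rewrite !inE => u_rep v_rep u_neq_v p.
  move=> /andP[/andP[p_path _] /eqP p_last].
  have uv : connect arc u v by apply/connectP; exists p.
  by rewrite (terminal_rep_connect_eq u_rep v_rep uv) eqxx in u_neq_v.
move=> x _; have [s xs s_rep] := connect_terminal_rep arc x.
have [p p_short p_last] := connect_shortest_dipath xs.
exists s, p; split; first by rewrite inE.
  by rewrite /dipath_from_to p_last eqxx andbT; case: p_short.
by rewrite (shortest_dipath_H_length arc_qt triangle_H_cycle p_short); lia.
Qed.
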